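(* Let $X$ be a proper metric space and $Y$ a geodesic metric space. Let $F\colon X\to Y$ be an $L$-Lipschitz quotient mapping, and suppose $F$ is injective on $B(x,r)$ for some $x\in X$, $r>0$. Then $F$ is $L$-bilipschitz on $B(x,r/(1+2L^2))$, i.e. $L^{-1}d(p,q)\le d(F(p),F(q))\le L\,d(p,q)$ for all $p,q\in B(x,r/(1+2L^2))$.
   Context: A metric space is proper if closed balls are compact, and geodesic if any two points are joined by a curve whose length equals their distance. $F$ is an $L$-Lipschitz quotient ($L$-LQ) mapping, $L\ge1$, if $B(F(x),r/L)\subseteq F(B(x,r))\subseteq B(F(x),Lr)$ for all $x\in X$, $r>0$ ($B$ = open balls). *)

From Stdlib Require Import Reals Lra List.
Open Scope R_scope.

Record MetricSpace := {
  mpt :> Type;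
  mdist : mpt -> mpt -> R;
  mdist_nonneg : forall x y, 0 <= mdist x y;
  mdist_eq0 : forall x y, mdist x y = 0 <-> x = y;
  mdist_sym : forall x y, mdist x y = mdist y x;
  mdist_tri : forall x y z, mdist x z <= mdist x y + mdist y z
}.

Arguments mdist {m} _ _.

Definition ball {X : MetricSpace} (x : X) (r : R) : X -> Prop :=
  fun y => mdist x y < r.

Definition cball {X : MetricSpace} (x : X) (r : R) : X -> Prop :=
  fun y => mdist x y <= r.

Definition is_open {X : MetricSpace} (U : X -> Prop) : Prop :=
  forall x, U x -> exists e, 0 < e /\ forall y, ball x e y -> U y.

Definition compact {X : MetricSpace} (K : X -> Prop) : Prop :=
  forall (I : Type) (U : I -> X -> Prop),
    (forall i, is_open (U i)) ->
    (forall x, K x -> exists i, U i x) ->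
    exists l : list I, forall x, K x -> exists i, In i l /\ U i x.

Definition proper (X : MetricSpace) : Prop :=
  forall (x : X) (r : R), compact (cball x r).

Definition continuous_on_interval {Y : MetricSpace} (a b : R) (g : R -> Y) : Prop :=
  forall t, a <= t <= b -> forall e, 0 < e -> exists d, 0 < d /\
    forall s, a <= s <= b -> Rabs (s - t) < d -> mdist (g t) (g s) < e.

Fixpoint poly_length {Y : MetricSpace} (g : R -> Y) (t0 : R) (ts : list R) : R :=
  match ts with
  | nil => 0
  | t1 :: ts' => mdist (g t0) (g t1) + poly_length g t1 ts'
  end.

Fixpoint increasing_from (t0 : R) (ts : list R) : Prop :=
  match ts with
  | nil => True
  | t1 :: ts' => t0 <= t1 /\ increasing_from t1 ts'
  end.

Definition partition_of (a b : R) (ts : list R) : Prop :=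
  increasing_from a ts /\ last ts a = b.

Definition curve_length_is {Y : MetricSpace} (a b : R) (g : R -> Y) (L : R) : Prop :=
  is_lub (fun s => exists ts, partition_of a b ts /\ s = poly_length g a ts) L.

Definition geodesic (Y : MetricSpace) : Prop :=
  forall p q : Y, exists (a b : R) (g : R -> Y),
    a <= b /\ continuous_on_interval a b g /\ g a = p /\ g b = q /\
    curve_length_is a b g (mdist p q).

Definition LQ {X Y : MetricSpace} (L : R) (F : X -> Y) : Prop :=
  1 <= L /\
  forall (x : X) (r : R), 0 < r ->
    (forall y : Y, ball (F x) (r / L) y -> exists x', ball x r x' /\ F x' = y) /\
    (forall x', ball x r x' -> ball (F x) (L * r) (F x')).

From Stdlib Require Import Reals Lra.
Open Scope R_scope.

(* The upper bound is the Lipschitz half of the LQ condition. For the lower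
   bound, the co-Lipschitz half lifts F q to some point within roughly
   L d(F p, F q) of p; when that ball around p stays inside the region where F
   is injective, the lift must be q itself, so d(p, q) <= L d(F p, F q). *)

Section LipschitzQuotient.

Variables (X Y : MetricSpace) (L : R) (F : X -> Y).
Hypothesis HF : LQ L F.

Lemma LQ_ge1 : 1 <= L.
Proof. exact (proj1 HF). Qed.

Lemma LQ_dist_le (p q : X) : mdist (F p) (F q) <= L * mdist p q.
Proof.
  destruct HF as [HL H].
  destruct (Rle_or_lt (mdist (F p) (F q)) (L * mdist p q)) as [h|h]; auto.
  exfalso.
  set (e := (mdist (F p) (F q) - L * mdist p q) / (2 * L)).
  assert (He : 0 < e) by (unfold e; apply Rdiv_lt_0_compat; lra).
  assert (Hs : 0 < mdist p q + e) by (pose proof (mdist_nonneg _ p q); lra).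
  destruct (H p _ Hs) as [_ Hlip].
  assert (Hq : ball p (mdist p q + e) q) by (unfold ball; lra).
  specialize (Hlip q Hq); unfold ball in Hlip.
  assert (L * e * 2 = mdist (F p) (F q) - L * mdist p q) by (unfold e; field; lra).
  nra.
Qed.

Lemma LQ_lift (p : X) (y : Y) (s : R) :
  0 < s -> mdist (F p) y < s -> exists p', mdist p p' < L * s /\ F p' = y.
Proof.
  intros Hs Hy.
  pose proof LQ_ge1 as HL.
  destruct (proj2 HF p (L * s)) as [Hco _]; [nra|].
  apply Hco; unfold ball.
  replace (L * s / L) with s by (field; lra); exact Hy.
Qed.

Lemma LQ_dist_ge_of_injective (U : X -> Prop) (p q : X) (rho : R) :
  (forall a b, U a -> U b -> F a = F b -> a = b) ->
  (forall y, ball p rho y -> U y) -> U q ->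
  L * mdist (F p) (F q) < rho ->
  mdist p q <= L * mdist (F p) (F q).
Proof.
  intros Hinj Hball Hq Hrho.
  pose proof LQ_ge1 as HL.
  set (d := mdist (F p) (F q)) in *.
  destruct (Rle_or_lt (mdist p q) (L * d)) as [h|h]; auto.
  exfalso.
  set (s := (L * d + Rmin rho (mdist p q)) / (2 * L)).
  assert (Hmin : L * d < Rmin rho (mdist p q)) by (apply Rmin_glb_lt; lra).
  assert (HLs : L * s = (L * d + Rmin rho (mdist p q)) / 2)
    by (unfold s; field; lra).
  assert (Hd : 0 <= d) by apply mdist_nonneg.
  assert (Hs : d < s) by nra.
  destruct (LQ_lift p (F q) s) as [p' [Hp' HFp']]; [lra | exact Hs |].
  assert (Hrho' : Rmin rho (mdist p q) <= rho) by apply Rmin_l.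
  assert (Hpq : Rmin rho (mdist p q) <= mdist p q) by apply Rmin_r.
  assert (p' = q) as -> by (apply Hinj; auto; apply Hball; unfold ball; lra).
  lra.
Qed.

End LipschitzQuotient.

Theorem lemma3p6 (X Y : MetricSpace) (L : R) (F : X -> Y) (x : X) (r : R) :
  proper X -> geodesic Y -> LQ L F -> 0 < r ->
  (forall p q, ball x r p -> ball x r q -> F p = F q -> p = q) ->
  forall p q, ball x (r / (1 + 2 * L ^ 2)) p -> ball x (r / (1 + 2 * L ^ 2)) q ->
    / L * mdist p q <= mdist (F p) (F q) /\ mdist (F p) (F q) <= L * mdist p q.
Proof.
  intros _ _ HF Hr Hinj p q Hp Hq.
  pose proof (LQ_ge1 _ _ _ _ HF) as HL.
  pose proof (LQ_dist_le _ _ _ _ HF p q) as Hup.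
  unfold ball in Hp, Hq.
  set (r' := r / (1 + 2 * L ^ 2)) in *.
  assert (Hr' : r' + 2 * L ^ 2 * r' = r) by (unfold r'; field; nra).
  assert (Hpq : mdist p q < 2 * r').
  { pose proof (mdist_tri _ p x q); rewrite (mdist_sym _ p x) in *; lra. }
  assert (Hsmall : L * mdist (F p) (F q) < r - r').
  { assert (L * mdist (F p) (F q) <= L * (L * mdist p q))
      by (apply Rmult_le_compat_l; lra).
    assert (L * (L * mdist p q) < L * (L * (2 * r'))).
    { apply Rmult_lt_compat_l; [lra|]. apply Rmult_lt_compat_l; lra. }
    simpl in Hr'; lra. }
  split; [| exact Hup].
  assert (Hlow : mdist p q <= L * mdist (F p) (F q)).
  { apply (LQ_dist_ge_of_injective _ _ _ _ HF (ball x r) p q (r - r')); auto.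
    - intros y Hy; unfold ball in *; pose proof (mdist_tri _ x p y); lra.
    - unfold ball; nra. }
  apply (Rmult_le_reg_l L); [lra|].
  rewrite <- Rmult_assoc, Rinv_r by lra; lra.
Qed.
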